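(* Let $\mathbf{B}$ be a unital ring. In the Labyrinth Category the following two equations hold, for every multi-set $P$ of passages, elements $x\in X$, $y\in Y$ (denoted $\ast\to\ast$ below) and $a_1,\dots,a_n\in\mathbf{B}$ (whenever the displayed multi-sets are mazes): $$\Big[P\cup\{x\xrightarrow{\sum_{i=1}^na_i}y\}\Big]=\sum_{\emptyset\ne I\subseteq[n]}\Big[P\cup\bigcup_{i\in I}\{x\xrightarrow{a_i}y\}\Big],$$ $$\Big[P\cup\bigcup_{i=1}^n\{x\xrightarrow{a_i}y\}\Big]=\sum_{I\subseteq[n]}(-1)^{n-|I|}\Big[P\cup\{x\xrightarrow{\sum_{i\in I}a_i}y\}\Big].$$
   Context: $[n]=\{1,\dots,n\}$; $\cup$ denotes multi-set sum. A passage $x\xrightarrow{a}y$ from an element of a finite set $X$ to an element of a finite set $Y$ carries a label $a\in\mathbf{B}$. A maze $X\to Y$ is a finite multi-set of passages such that every element of $X$ is a source and every element of $Y$ a target of some passage. In the Labyrinth Category $\mathfrak{Laby}$, the morphism group $\mathfrak{Laby}(X,Y)$ is generated by mazes $X\to Y$ modulo the relations (I) $P\cup\{x\xrightarrow0y\}=0$ and (II) $P\cup\{x\xrightarrow{a+b}y\}=P\cup\{x\xrightarrow ay\}+P\cup\{x\xrightarrow by\}+P\cup\{x\xrightarrow ay,x\xrightarrow by\}$, for all multi-sets of passages $P$ and $a,b\in\mathbf{B}$. A term $[P\cup\{x\xrightarrow{0}y\}]$ arising from $I=\emptyset$ in the second equation is $0$ by (I). *)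

From HB Require Import structures.
From mathcomp Require Import all_boot all_order all_algebra.
From mathcomp Require Import finmap multiset.
From mathcomp Require Import freeg.

Set Implicit Arguments.
Unset Strict Implicit.
Unset Printing Implicit Defensive.

Import GRing.Theory.
Local Open Scope ring_scope.
Local Open Scope mset_scope.

Section Laby.
Variables (B : pzRingType) (X Y : finType).

Definition passage : choiceType := ((X * B) * Y)%type.

Definition pass (x : X) (a : B) (y : Y) : passage := ((x, a), y).

Definition src (p : passage) : X := p.1.1.
Definition lbl (p : passage) : B := p.1.2.
Definition tgt (p : passage) : Y := p.2.

Definition passages := {mset passage}.

Definition is_maze (P : passages) : Prop :=
  (forall x : X, exists2 p, p \in P & src p = x) /\
  (forall y : Y, exists2 p, p \in P & tgt p = y).

Definition formal := {freeg passages}.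

Definition lab (P : passages) : formal := << P >>.

(* The subgroup generated by relations (I) and (II) (instances in which
   the multi-sets involved are mazes; note all multi-sets in one instance
   have the same sources and targets, so they are all mazes or none is). *)
Inductive laby_rel : formal -> Prop :=
| laby_rel0 : laby_rel 0
| laby_relD z1 z2 : laby_rel z1 -> laby_rel z2 -> laby_rel (z1 + z2)
| laby_relN z : laby_rel z -> laby_rel (- z)
| laby_relI (P : passages) x y :
    is_maze (pass x 0 y +` P) -> laby_rel (lab (pass x 0 y +` P))
| laby_relII (P : passages) x y (a b : B) :
    is_maze (pass x (a + b) y +` P) ->
    laby_rel (lab (pass x (a + b) y +` P)
              - lab (pass x a y +` P)
              - lab (pass x b y +` P)
              - lab (pass x a y +` (pass x b y +` P))).

Definition laby_eq (z1 z2 : formal) : Prop := laby_rel (z1 - z2).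

Definition bigpass n (x : X) (y : Y) (a : 'I_n -> B) (I : {set 'I_n}) : passages :=
  \big[@msetD _/mset0]_(i in I) [mset pass x (a i) y].

End Laby.

From HB Require Import structures.
From mathcomp Require Import all_boot all_order all_algebra.
From mathcomp Require Import finmap multiset.
From mathcomp Require Import freeg.
Import GRing.Theory.
Local Open Scope ring_scope.
Local Open Scope mset_scope.

(* Relation (II) splits a label c + d into the three multi-sets keeping c, d or
   both.  Peeling off the labels a_j one at a time, this gives for every J
     [P + {x -(sum_(i in J) a_i)-> y}] + [P] = sum_(I <= J) [P + U_(i in I) {x -a_i-> y}],
   the extra [P] being the term I = set0; the base case J = set0 is relation (I).
   The second identity is the Moebius inversion of the first over the lattice of
   subsets of J, the correction [P] disappearing because the alternating sum
   sum_(I <= J) (-1)^(#|J| - #|I|) vanishes when J is nonempty. *)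

Section SubsetSums.
Context {T : finType}.
Implicit Types (I J : {set T}) (j : T).

Lemma set_ind (Q : {set T} -> Prop) :
  Q set0 -> (forall j J, j \notin J -> Q J -> Q (j |: J)) -> forall J, Q J.
Proof.
move=> Q0 QU1 J; elim: {J}_.+1 {-2}J (ltnSn #|J|) => // k IH J ltJk.
have [-> // | [j Jj]] := set_0Vmem J.
rewrite -(setD1K Jj); apply: QU1; first by rewrite setD11.
by apply: IH; move: ltJk; rewrite (cardsD1 j) Jj.
Qed.

Lemma notin_subset {I J j} : I \subset J -> j \notin J -> j \notin I.
Proof. by move=> /subsetP sIJ; apply: contra => /sIJ. Qed.

Lemma big_subsetU1 {V : nmodType} (F : {set T} -> V) J j : j \notin J ->
  \sum_(I : {set T} | I \subset j |: J) F I =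
  \sum_(I : {set T} | I \subset J) F I + \sum_(I : {set T} | I \subset J) F (j |: I).
Proof.
move=> Jj; rewrite (bigID (fun I : {set T} => j \in I)) /= addrC; congr (_ + _).
  by apply: eq_bigl => I; rewrite -subsetD1 setU1K.
rewrite (reindex_onto (fun I : {set T} => j |: I) (fun I : {set T} => I :\ j)) /=;
  last by move=> I /andP[_ /setD1K].
apply: eq_bigl => I; rewrite setU11 andbT.
apply/andP/idP => [[sIJ /eqP <-] | sIJ].
  by rewrite -(setU1K Jj) setSD.
by rewrite setUS // setU1K // (notin_subset sIJ).
Qed.

(* The sign (-1)^(#|J| - #|I|) is written with an addition, avoiding truncated
   subtraction. *)
Lemma subset_moebius {V : zmodType} (G : {set T} -> V) J :
  \sum_(I : {set T} | I \subset J)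
     (\sum_(K : {set T} | K \subset I) G K) *~ (-1) ^+ (#|J| + #|I|) = G J.
Proof.
elim/set_ind: J G => [|j J Jj IH] G.
  rewrite (big_pred1 set0) => [|I]; last by rewrite subset0.
  by rewrite (big_pred1 set0) => [|I]; rewrite ?subset0 // cards0.
rewrite big_subsetU1 // -big_split /= -(IH (fun K => G (j |: K))).
apply: eq_bigr => I sIJ; have Ij := notin_subset sIJ Jj.
rewrite big_subsetU1 // !cardsU1 Jj Ij !add1n !addnS !addSn !exprS !mulN1r opprK.
by rewrite mulrNz mulrzDl addKr.
Qed.

Lemma sum_subset_sign J :
  \sum_(I : {set T} | I \subset J) (-1) ^+ (#|J| + #|I|) = (J == set0)%:R :> int.
Proof.
rewrite -(subset_moebius (fun K => (K == set0)%:R : int)).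
apply: eq_bigr => I _; rewrite (bigD1 set0) ?sub0set //= eqxx.
by rewrite big1 => [|K /andP[_ /negbTE->] //]; rewrite addr0 mulr1n intz.
Qed.

End SubsetSums.

HB.instance Definition _ (K : choiceType) :=
  Monoid.isComLaw.Build {mset K} mset0 (@msetD K) (@msetDA K) (@msetDC K) (@mset0D K).

Lemma sign_addn_subn {R : pzRingType} {m k} :
  (k <= m)%N -> (-1) ^+ (m + k) = (-1) ^+ (m - k) :> R.
Proof. by move=> km; rewrite -signr_odd oddD -oddB // signr_odd. Qed.

Section Labyrinth.
Context {B : pzRingType} {X Y : finType}.
Implicit Types (P Q : passages B X Y) (z w : formal B X Y).

Lemma laby_eq_refl z : laby_eq z z.
Proof. by rewrite /laby_eq subrr; exact: laby_rel0. Qed.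

Lemma laby_eq_sym {z1 z2} : laby_eq z1 z2 -> laby_eq z2 z1.
Proof. by move=> e; rewrite /laby_eq -opprB; exact: laby_relN. Qed.

Lemma laby_eq_trans {z1 z2 z3} : laby_eq z1 z2 -> laby_eq z2 z3 -> laby_eq z1 z3.
Proof. by move=> e12 e23; rewrite /laby_eq -(subrKA z2); exact: laby_relD. Qed.

Lemma laby_eqD {z1 z2 w1 w2} :
  laby_eq z1 z2 -> laby_eq w1 w2 -> laby_eq (z1 + w1) (z2 + w2).
Proof. by move=> ez ew; rewrite /laby_eq opprD addrACA; exact: laby_relD. Qed.

Lemma laby_eq_mulz {z1 z2} (k : int) : laby_eq z1 z2 -> laby_eq (z1 *~ k) (z2 *~ k).
Proof.
move=> e; rewrite /laby_eq -mulrzBl.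
have rel_mulrn m : laby_rel ((z1 - z2) *+ m).
  by elim: m => [|m IHm]; [rewrite mulr0n; exact: laby_rel0 | rewrite mulrS; exact: laby_relD].
by case: k => m; rewrite ?NegzE ?mulrNz; [|apply: laby_relN]; exact: rel_mulrn.
Qed.

Lemma laby_eq_sum (I : Type) (r : seq I) (p : pred I) (F G : I -> formal B X Y) :
  (forall i, p i -> laby_eq (F i) (G i)) ->
  laby_eq (\sum_(i <- r | p i) F i) (\sum_(i <- r | p i) G i).
Proof.
move=> eFG; elim/big_rec2: _ => [|i z w pi]; first exact: laby_eq_refl.
exact: laby_eqD (eFG i pi).
Qed.

Lemma is_maze_relabelD {P} Q {x y c} c' :
  is_maze (pass x c y +` P) -> is_maze (pass x c' y +` (Q `+` P)).
Proof.
have lift p : p \in pass x c y +` P ->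
    exists2 q, q \in pass x c' y +` (Q `+` P) & (src q, tgt q) = (src p, tgt p).
  case/msetDP => [|pP].
    by rewrite in_mset1 => /eqP->; exists (pass x c' y); rewrite // in_msetD in_mset1 eqxx.
  by exists p; rewrite // !in_msetD pP !orbT.
case=> Hx Hy; split=> [u|v].
  by have [p /lift[q qQ [<- _]] <-] := Hx u; exists q.
by have [p /lift[q qQ [_ <-]] <-] := Hy v; exists q.
Qed.

Lemma is_maze_relabel {P x y c} c' :
  is_maze (pass x c y +` P) -> is_maze (pass x c' y +` P).
Proof. by move=> /(is_maze_relabelD mset0 c'); rewrite mset0D. Qed.

Lemma laby_eq_label0 {P x y} :
  is_maze (pass x 0 y +` P) -> laby_eq (lab (pass x 0 y +` P)) 0.
Proof. by rewrite /laby_eq subr0; exact: laby_relI. Qed.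

Lemma laby_eq_labelD {P x y} {c d : B} :
  is_maze (pass x (c + d) y +` P) ->
  laby_eq (lab (pass x (c + d) y +` P))
          (lab (pass x c y +` P) + lab (pass x d y +` P)
           + lab (pass x c y +` (pass x d y +` P))).
Proof. by move=> /laby_relII; rewrite /laby_eq !opprD !addrA. Qed.

End Labyrinth.

Section LabelDecomposition.
Context {B : pzRingType} {X Y : finType} {x : X} {y : Y} {n : nat} (a : 'I_n -> B).
Implicit Types (P : passages B X Y) (I J : {set 'I_n}).

Lemma bigpass0 : bigpass x y a set0 = mset0.
Proof. by rewrite /bigpass big_set0. Qed.

Lemma bigpassU1 j I :
  j \notin I -> bigpass x y a (j |: I) = pass x (a j) y +` bigpass x y a I.
Proof. by move=> Ij; rewrite /bigpass big_setU1. Qed.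

Lemma laby_eq_label_sum {P c} J : is_maze (pass x c y +` P) ->
  laby_eq (lab (pass x (\sum_(i in J) a i) y +` P) + lab P)
          (\sum_(I : {set 'I_n} | I \subset J) lab (bigpass x y a I `+` P)).
Proof.
elim/(@set_ind 'I_n): J P c => [|j J Jj IH] P c HP.
  rewrite big_set0 (big_pred1 set0) => [|I]; last by rewrite subset0.
  rewrite bigpass0 mset0D -[X in laby_eq _ X]add0r.
  apply: laby_eqD; last exact: laby_eq_refl.
  exact: laby_eq_label0 (is_maze_relabel 0 HP).
rewrite big_setU1 //= big_subsetU1 //.
apply: laby_eq_trans (laby_eqD (laby_eq_labelD (is_maze_relabel _ HP)) (laby_eq_refl _)) _.
set Aj := lab (pass x (a j) y +` P); set S := lab (pass x (\sum_(i in J) a i) y +` P).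
have -> : Aj + S + lab (pass x (a j) y +` (pass x (\sum_(i in J) a i) y +` P)) + lab P
    = (S + lab P) + (lab (pass x (\sum_(i in J) a i) y +` (pass x (a j) y +` P)) + Aj).
  rewrite msetDCA [Aj + S]addrC -!addrA; congr (S + _).
  by rewrite addrCA addrA addrC.
apply: laby_eqD; first exact: IH HP.
rewrite (eq_bigr (fun I => lab (bigpass x y a I `+` (pass x (a j) y +` P)))).
  exact: IH (is_maze_relabelD _ c HP).
move=> I sIJ; rewrite bigpassU1; last exact: notin_subset sIJ Jj.
by rewrite msetDCA msetDA.
Qed.

Lemma laby_eq_bigpass {P c J} : J != set0 -> is_maze (pass x c y +` P) ->
  laby_eq (lab (bigpass x y a J `+` P))
          (\sum_(I : {set 'I_n} | I \subset J)
             lab (pass x (\sum_(i in I) a i) y +` P) *~ (-1) ^+ (#|J| + #|I|)).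
Proof.
move=> J0 HP; rewrite -(subset_moebius (fun I => lab (bigpass x y a I `+` P))).
have -> : \sum_(I : {set 'I_n} | I \subset J)
      lab (pass x (\sum_(i in I) a i) y +` P) *~ (-1) ^+ (#|J| + #|I|)
    = \sum_(I : {set 'I_n} | I \subset J)
      (lab (pass x (\sum_(i in I) a i) y +` P) + lab P) *~ (-1) ^+ (#|J| + #|I|).
  under [RHS]eq_bigr do rewrite mulrzDl.
  by rewrite big_split /= -mulrz_sumr sum_subset_sign (negbTE J0) mulr0z addr0.
apply: laby_eq_sum => I _; apply: laby_eq_mulz.
exact/laby_eq_sym/(laby_eq_label_sum I HP).
Qed.

End LabelDecomposition.

Theorem mainTheorem15 (B : pzRingType) (X Y : finType) (P : passages B X Y)
  (x : X) (y : Y) (n : nat) (a : 'I_n -> B) :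
  (0 < n)%N ->
  is_maze (pass x (\sum_(i < n) a i) y +` P) ->
  laby_eq (lab (pass x (\sum_(i < n) a i) y +` P))
          (\sum_(I : {set 'I_n} | I != set0) lab (bigpass x y a I `+` P))
  /\
  laby_eq (lab (bigpass x y a [set: 'I_n] `+` P))
          (\sum_(I : {set 'I_n})
             (lab (pass x (\sum_(i in I) a i) y +` P)) *~ ((-1) ^+ (n - #|I|))).
Proof.
move=> n_gt0 HP; split.
  have sum_setT : \sum_(i in [set: 'I_n]) a i = \sum_(i < n) a i.
    by apply: eq_bigl => i; rewrite in_setT.
  have := laby_eq_label_sum a [set: 'I_n] HP.
  rewrite sum_setT /laby_eq (bigD1 set0) ?sub0set //= bigpass0 mset0D addrKA.
  by rewrite (eq_bigl (fun I : {set 'I_n} => I != set0)) // => I; rewrite subsetT.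
have setT0 : [set: 'I_n] != set0 by apply/set0Pn; exists (Ordinal n_gt0).
have := laby_eq_bigpass a setT0 HP; rewrite cardsT card_ord.
under eq_bigl do rewrite subsetT.
have card_le_n (I : {set 'I_n}) : (#|I| <= n)%N by have := max_card I; rewrite card_ord.
by under eq_bigr => I _ do rewrite (sign_addn_subn (card_le_n I)).
Qed.
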